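(* Let $\epsilon>0$, $R\in\mathbb{R}$, and let $s_R\ge0$ and $m_R<\beta$ be constants such that every $\varphi\in\Theta$ with $L(\varphi)\ge R$ satisfies $|\varphi(0)|\le s_R$ and $\sup_x\varphi'(x+)\le m_R$. Suppose $\theta\in\Theta$ and $\tau\in\mathbb{R}_{\ge0}$ satisfy $DL(\theta,V_\tau)>\epsilon$ and $R\le L(\theta)$. Let $g:\mathbb{R}_{\ge0}\to[-\infty,\infty)$ be $g(t):=L(\theta+tV_\tau)-L(\theta)$. Then for $t$ in the set $\{t: g(t)\ge0\}$, the magnitude $|g''(t)|$ of the second derivative of $g$ is bounded above by a finite constant depending only on $s_R$ and $m_R$ (given the fixed density $f$ and data $x_1,\dots,x_n$).
   Context: Let $f$ be a probability density on $\mathbb{R}_{\ge0}$ satisfying the standing assumptions: (A1) $f$ is continuous and $f(x)>0$ for all $x>0$; (A2) there is $\beta\in\mathbb{R}$ such that for every $\lambda\in\mathbb{R}$, $\int_0^\infty e^{\lambda x}f(x)\,dx<\infty$ if and only if $\lambda<\beta$, and $\lim_{\lambda\to\beta^-}\int_0^\infty e^{\lambda x}f(x)\,dx=\infty$; (A3) for every $\lambda\in\mathbb{R}$, $\int_0^\infty e^{\lambda x}f(x)dx<\infty$ implies $\int_0^\infty x^2e^{\lambda x}f(x)dx<\infty$. Let $M$ be the measure on $\mathbb{R}_{\ge0}$ with density $f$. Fix data $x_1\le\dots\le x_n$ in $\mathbb{R}_{\ge0}$ with empirical distribution $\hat P=\frac1n\sum_{i=1}^n\delta_{x_i}$. $\Theta$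 is the set of convex non-decreasing functions $\theta:\mathbb{R}_{\ge0}\to\mathbb{R}$. For $\theta\in\Theta$, $L(\theta):=\int\theta\,d\hat P-\int e^{\theta}\,dM+1\in[-\infty,\infty)$. For $\theta\in\Theta$ and a function $v$, $DL(\theta,v):=\lim_{t\to0^+}\frac{L(\theta+tv)-L(\theta)}{t}$. For $\tau\ge0$, $V_\tau(x):=(x-\tau)^+$. *)

From mathcomp Require Import all_boot all_order all_algebra.
From mathcomp Require Import all_classical all_reals all_analysis.
Import Order.TTheory GRing.Theory Num.Theory.
Import numFieldNormedType.Exports.
Set Implicit Arguments. Unset Strict Implicit. Unset Printing Implicit Defensive.
Local Open Scope classical_set_scope.
Local Open Scope ring_scope.

(* integral of h against the measure M with density f on R_{>=0} *)
Definition intM (R : realType) (f : R -> R) (h : R -> R) : \bar R :=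
  (\int[@lebesgue_measure R]_(y in `[0%R, +oo[%classic) ((h y * f y)%:E))%E.

Definition is_density (R : realType) (f : R -> R) : Prop :=
  (forall y, 0 <= y -> 0 <= f y) /\ intM f (fun _ => 1) = 1%E.

Definition A1 (R : realType) (f : R -> R) : Prop :=
  {within `[0%R, +oo[%classic, continuous f} /\ (forall y, 0 < y -> 0 < f y).

Definition A2 (R : realType) (f : R -> R) (beta : R) : Prop :=
  (forall lam : R, (intM f (fun y => expR (lam * y)%R) < +oo)%E <-> lam < beta) /\
  ((fun lam : R => intM f (fun y => expR (lam * y)%R)) @ beta^'- --> +oo%E).

Definition A3 (R : realType) (f : R -> R) : Prop :=
  forall lam : R, (intM f (fun y => expR (lam * y)%R) < +oo)%E ->
    (intM f (fun y => (y ^+ 2 * expR (lam * y))%R) < +oo)%E.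

(* Theta: convex non-decreasing functions on R_{>=0} (values on y < 0 are irrelevant) *)
Definition inTheta (R : realType) (th : R -> R) : Prop :=
  (forall a b, 0 <= a -> a <= b -> th a <= th b) /\
  (forall a b l, 0 <= a -> 0 <= b -> 0 <= l -> l <= 1 ->
     th (l * a + (1 - l) * b) <= l * th a + (1 - l) * th b).

(* int theta dPhat, Phat = (1/n) sum delta_{x_i} *)
Definition Phat_int (R : realType) (n : nat) (x : 'I_n -> R) (th : R -> R) : R :=
  n%:R^-1 * \sum_(i < n) th (x i).

Definition Lik (R : realType) (f : R -> R) (n : nat) (x : 'I_n -> R) (th : R -> R)
  : \bar R :=
  ((Phat_int x th)%:E - intM f (fun y => expR (th y)) + 1%:E)%E.

Definition Vtau (R : realType) (tau : R) (y : R) : R := Num.max (y - tau) 0.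

Definition addsc (R : realType) (th : R -> R) (t : R) (v : R -> R) : R -> R :=
  fun y => th y + t * v y.

Definition DLlim (R : realType) (f : R -> R) (n : nat) (x : 'I_n -> R)
  (th v : R -> R) (l : \bar R) : Prop :=
  (fun t : R => ((Lik f x (addsc th t v) - Lik f x th) * (t^-1)%:E)%E) @ 0^'+ --> l.

Definition rderiv (R : realType) (phi : R -> R) (y : R) : R :=
  lim ((fun h : R => (phi (y + h) - phi y) / h) @ 0^'+).

Definition gfun (R : realType) (f : R -> R) (n : nat) (x : 'I_n -> R)
  (th : R -> R) (tau t : R) : \bar R :=
  (Lik f x (addsc th t (Vtau tau)) - Lik f x th)%E.

(* real-valued version of g (g is finite near any t >= 0 with g t >= 0) *)
Definition greal (R : realType) (f : R -> R) (n : nat) (x : 'I_n -> R)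
  (th : R -> R) (tau : R) : R -> R :=
  fun t => fine (gfun f x th tau t).

From mathcomp Require Import all_boot all_order all_algebra.
From mathcomp Require Import all_classical all_reals all_analysis.
From mathcomp Require Import lra ring.
From mathcomp Require Import measurable_realfun.
Import Order.TTheory GRing.Theory Num.Theory.
Import numFieldNormedType.Exports.
Set Implicit Arguments. Unset Strict Implicit. Unset Printing Implicit Defensive.
Local Open Scope classical_set_scope.
Local Open Scope ring_scope.

(* Along the path phi_u = theta + u V_tau one has
   g(u) = u int V_tau dPhat - int e^(phi_u) dM + int e^theta dM,
   so differentiating twice under the integral gives g''(u) = - int V_tau^2 e^(phi_u) dM.
   If g(t) >= 0 then L(phi_t) >= L(theta) >= R, hence |phi_t(0)| <= s_R and the right
   derivative of phi_t is at most m_R, and convexity gives phi_t(y) <= s_R + m_R y.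
   As 0 <= V_tau(y) <= y, |g''(t)| <= e^(s_R) int y^2 e^(m_R y) dM, which is finite by
   (A2) and (A3) because m_R < beta. *)

Lemma in_itvcy_ge0 (R : realType) (y : R) : `[0%R, +oo[%classic y <-> 0 <= y.
Proof. by rewrite /= in_itv /= andbT. Qed.

Section tilted_moments.
Context (R : realType).
Local Notation mu := (@lebesgue_measure R).
Local Notation D := (`[0%R, +oo[%classic : set R).
Variables th v f : R -> R.

Definition tilt_integrand (k : nat) (u y : R) : R :=
  v y ^+ k * f y * expR (th y + u * v y).

Definition tilt_moment (k : nat) (u : R) : R := Rintegral mu D (tilt_integrand k u).

Lemma is_derive_tilt_integrand (k : nat) (u y : R) :
  is_derive u (1 : R) (tilt_integrand k ^~ y) (tilt_integrand k.+1 u y).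
Proof.
have lin : is_derive u (1 : R) (fun w : R => th y + w * v y) (v y).
  by apply: is_derive_eq; rewrite scaler0 !add0r mul1r; exact: mulr1.
have -> : tilt_integrand k.+1 u y = (v y ^+ k * f y) * (expR (th y + u * v y) * v y).
  by rewrite /tilt_integrand exprS /=; ring.
exact: is_deriveZ (is_derive1_comp (is_derive_expR _) lin).
Qed.

Hypotheses (mth : measurable_fun D th) (mv : measurable_fun D v) (mf : measurable_fun D f).
Hypotheses (v_ge0 : forall y, 0 <= v y) (f_ge0 : forall y, D y -> 0 <= f y).

Lemma tilt_integrand_ge0 k u y : D y -> 0 <= tilt_integrand k u y.
Proof.
by move=> Dy; rewrite !mulr_ge0 ?exprn_ge0 ?expR_ge0 ?f_ge0.
Qed.

Lemma ler_tilt_integrand k u w y : D y -> u <= w ->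
  tilt_integrand k u y <= tilt_integrand k w y.
Proof.
move=> Dy uw; rewrite ler_wpM2l ?mulr_ge0 ?exprn_ge0 ?f_ge0//.
by rewrite ler_expR lerD2l ler_wpM2r.
Qed.

Lemma tilt_integrand_le k u s m y : D y -> th y + u * v y <= s + m * y ->
  tilt_integrand k u y <= expR s * (v y ^+ k * expR (m * y) * f y).
Proof.
move=> Dy exponent_le.
have -> : expR s * (v y ^+ k * expR (m * y) * f y) = v y ^+ k * f y * expR (s + m * y).
  by rewrite expRD; ring.
by rewrite ler_wpM2l ?mulr_ge0 ?exprn_ge0 ?f_ge0 // ler_expR.
Qed.

Lemma measurable_tilt_integrand k u : measurable_fun D (tilt_integrand k u).
Proof.
apply: measurable_funM; first by apply: measurable_funM => //; exact: measurable_funX.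
apply: measurableT_comp; first exact: measurable_expR.
by apply: measurable_funD => //; apply: measurable_funM => //; exact: measurable_cst.
Qed.

Lemma le_integrable_tilt k u w : u <= w ->
  mu.-integrable D (EFin \o tilt_integrand k w) ->
  mu.-integrable D (EFin \o tilt_integrand k u).
Proof.
move=> uw; apply: le_integrable => //.
  by apply/measurable_EFinP; exact: measurable_tilt_integrand.
move=> y Dy /=; rewrite lee_fin !ger0_norm ?tilt_integrand_ge0//.
exact: ler_tilt_integrand.
Qed.

Lemma is_derive_tilt_moment k u w : u < w ->
  mu.-integrable D (EFin \o tilt_integrand k w) ->
  mu.-integrable D (EFin \o tilt_integrand k.+1 w) ->
  is_derive u (1 : R) (tilt_moment k) (tilt_moment k.+1 u).
Proof.
move=> uw intk intk1.
have Iu : `](u - 1), w[%classic u by rewrite /= in_itv /= uw andbT ltrBlDr ltrDl.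
have intI z : `](u - 1), w[%classic z -> mu.-integrable D (EFin \o tilt_integrand k z).
  by rewrite /= in_itv /= => /andP[_ /ltW zw]; exact: le_integrable_tilt intk.
have derI z y : `](u - 1), w[%classic z -> D y -> derivable (tilt_integrand k ^~ y) z 1.
  by move=> _ _; case: (is_derive_tilt_integrand k z y).
have d1E z y : partial1of2 (tilt_integrand k) z y = tilt_integrand k.+1 z y.
  by rewrite partial1of2E; case: (is_derive_tilt_integrand k z y).
(* on ]u - 1, w[ the derivative is dominated by the integrand of order k+1 at w *)
have G_ge0 y : 0 <= `|tilt_integrand k.+1 w y| by [].
have intG : mu.-integrable D (EFin \o (fun y => `|tilt_integrand k.+1 w y|)).
  apply: le_integrable intk1 => //.
    by apply/measurable_EFinP/measurableT_comp => //; exact: measurable_tilt_integrand.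
  by move=> y Dy /=; rewrite normr_id.
have domG z y : `](u - 1), w[%classic z -> D y ->
    `|partial1of2 (tilt_integrand k) z y| <= `|tilt_integrand k.+1 w y|.
  rewrite /= in_itv /= d1E => /andP[_ /ltW zw] Dy.
  by rewrite !ger0_norm ?tilt_integrand_ge0 ?ler_tilt_integrand.
apply: DeriveDef.
  exact: (derivable_under_integral _ Iu intI derI G_ge0 intG domG).
rewrite -derive1E /tilt_moment.
rewrite (differentiation_under_integral _ Iu intI derI G_ge0 intG domG)//.
by apply: eq_Rintegral => y _; rewrite d1E.
Qed.

End tilted_moments.

Section convex_chord_slope.
Context (R : realType) (phi : R -> R).
Hypothesis phi_convex : forall a b l, 0 <= a -> 0 <= b -> 0 <= l -> l <= 1 ->
  phi (l * a + (1 - l) * b) <= l * phi a + (1 - l) * phi b.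
Variable y : R.
Hypothesis y_gt0 : 0 < y.

Let slope (h : R) : R := (phi (y + h) - phi y) / h.

Lemma chord_slope_le_right_slope h : 0 < h -> (phi y - phi 0) / y <= slope h.
Proof.
move=> h_gt0; have yh_gt0 : 0 < y + h by rewrite addr_gt0.
have l_ge0 : 0 <= h / (y + h) by rewrite divr_ge0 ?ltW.
have l_le1 : h / (y + h) <= 1 by rewrite ler_pdivrMr // mul1r lerDr ltW.
have := phi_convex (lexx 0) (ltW yh_gt0) l_ge0 l_le1.
have -> : h / (y + h) * 0 + (1 - h / (y + h)) * (y + h) = y.
  by field; rewrite gt_eqF.
have -> : h / (y + h) * phi 0 + (1 - h / (y + h)) * phi (y + h) =
    (h * phi 0 + y * phi (y + h)) / (y + h).
  by field; rewrite gt_eqF.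
rewrite ler_pdivlMr // /slope ler_pdivrMr // mulrAC ler_pdivlMr //; lra.
Qed.

Lemma right_slope_nondecreasing :
  {in `]0, 1[ &, nondecreasing_fun slope}.
Proof.
move=> h1 h2; rewrite !in_itv /= => /andP[h1_gt0 _] /andP[h2_gt0 _] h12.
have r_ge0 : 0 <= h1 / h2 by rewrite divr_ge0 ?ltW.
have r_le1 : h1 / h2 <= 1 by rewrite ler_pdivrMr // mul1r.
have := phi_convex (addr_ge0 (ltW y_gt0) (ltW h2_gt0)) (ltW y_gt0) r_ge0 r_le1.
have -> : h1 / h2 * (y + h2) + (1 - h1 / h2) * y = y + h1 by field; rewrite gt_eqF.
rewrite /slope ler_pdivrMr //.
have -> : (phi (y + h2) - phi y) / h2 * h1 =
    h1 / h2 * phi (y + h2) + (1 - h1 / h2) * phi y - phi y.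
  by field; rewrite gt_eqF.
lra.
Qed.

Lemma chord_slope_le_rderiv : (phi y - phi 0) / y <= rderiv phi y.
Proof.
have slope_lbound : has_lbound (slope @` [set` `]0, 1[]).
  exists ((phi y - phi 0) / y) => _ [h /andP[h_gt0 _] <-].
  exact: chord_slope_le_right_slope.
rewrite /rderiv -/slope.
have slope_cvg := @nondecreasing_at_right_cvgr R slope 0 (BLeft 1) ltr01
  right_slope_nondecreasing slope_lbound.
rewrite (cvg_lim _ slope_cvg) //; apply: lb_le_inf.
  by exists (slope 2^-1), 2^-1; rewrite //= in_itv /= invr_gt0 ltr0n invf_lt1 ?ltr1n.
by move=> _ [h /andP[h_gt0 _] <-]; exact: chord_slope_le_right_slope.
Qed.

End convex_chord_slope.

Lemma Theta_le_affine (R : realType) (phi : R -> R) (s m : R) : inTheta phi ->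
  `|phi 0| <= s -> (forall y, 0 <= y -> rderiv phi y <= m) ->
  forall y, 0 <= y -> phi y <= s + m * y.
Proof.
move=> [_ phi_convex] phi0_le rderiv_le y; rewrite le0r => /orP[/eqP -> | y_gt0].
  by rewrite mulr0 addr0 (le_trans (ler_norm _)).
have := chord_slope_le_rderiv phi_convex y_gt0; rewrite ler_pdivrMr // => chord_le.
have := ler_wpM2r (ltW y_gt0) (rderiv_le y (ltW y_gt0)).
have := ler_norm (phi 0); lra.
Qed.

Lemma Vtau_ge0 (R : realType) (tau y : R) : 0 <= Vtau tau y.
Proof. by rewrite /Vtau le_max lexx orbT. Qed.

Lemma Vtau_le_id (R : realType) (tau y : R) : 0 <= tau -> 0 <= y -> Vtau tau y <= y.
Proof. by move=> tau_ge0 y_ge0; rewrite /Vtau ge_max y_ge0 andbT lerBlDr lerDl. Qed.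

Lemma Vtau_nondecreasing (R : realType) (tau : R) : nondecreasing_fun (Vtau tau).
Proof. by move=> a b ab; rewrite /Vtau ge_max !le_max lerD2r ab lexx !orbT. Qed.

Lemma Vtau_convex (R : realType) (tau a b l : R) : 0 <= l -> l <= 1 ->
  Vtau tau (l * a + (1 - l) * b) <= l * Vtau tau a + (1 - l) * Vtau tau b.
Proof.
move=> l_ge0 l_le1; have l'_ge0 : 0 <= 1 - l by rewrite subr_ge0.
have Va : l * (a - tau) <= l * Vtau tau a by rewrite ler_wpM2l // le_max lexx.
have Vb : (1 - l) * (b - tau) <= (1 - l) * Vtau tau b by rewrite ler_wpM2l // le_max lexx.
rewrite {1}/Vtau ge_max addr_ge0 ?mulr_ge0 ?Vtau_ge0 // andbT; lra.
Qed.

Lemma inTheta_addsc_Vtau (R : realType) (th : R -> R) (t tau : R) :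
  inTheta th -> 0 <= t -> inTheta (addsc th t (Vtau tau)).
Proof.
move=> [th_nd th_convex] t_ge0; split=> [a b a_ge0 ab | a b l a_ge0 b_ge0 l_ge0 l_le1].
  by rewrite /addsc lerD ?th_nd ?ler_wpM2l ?Vtau_nondecreasing.
have := th_convex a b l a_ge0 b_ge0 l_ge0 l_le1.
have := ler_wpM2l t_ge0 (Vtau_convex tau a b l_ge0 l_le1).
rewrite /addsc; lra.
Qed.

Lemma measurable_Theta (R : realType) (th : R -> R) :
  inTheta th -> measurable_fun (`[0%R, +oo[%classic : set R) th.
Proof.
move=> [th_nd _].
(* th is only monotone on [0, +oo[, so measure th \o (max 0) instead *)
have th_max_nd : nondecreasing_fun (fun y => th (Num.max y 0)).
  move=> a b ab; apply: th_nd; first by rewrite le_max lexx orbT.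
  by rewrite ge_max !le_max ab lexx !orbT.
apply: eq_measurable_fun (nondecreasing_measurable (measurable_itv _) th_max_nd).
by move=> y; rewrite inE /= in_itv /= andbT => y_ge0; rewrite max_l.
Qed.

Lemma Phat_int_addsc (R : realType) (n : nat) (x : 'I_n -> R) (th v : R -> R) (u : R) :
  Phat_int x (addsc th u v) = Phat_int x th + u * Phat_int x v.
Proof. by rewrite /Phat_int /addsc big_split /= -mulr_sumr; ring. Qed.

Lemma Lik_addsc_ge (R : realType) (f : R -> R) (n : nat) (x : 'I_n -> R)
    (th : R -> R) (tau t Rc : R) :
  (forall y, 0 <= y -> 0 <= f y) -> (Rc%:E <= Lik f x th)%E ->
  (0 <= gfun f x th tau t)%E -> (Rc%:E <= Lik f x (addsc th t (Vtau tau)))%E.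
Proof.
move=> f_ge0 Rc_le g_ge0.
have int_ge0 : (0 <= intM f (fun y => expR (th y)))%E.
  by apply: integral_ge0 => y /in_itvcy_ge0 y_ge0; rewrite lee_fin mulr_ge0 ?expR_ge0 ?f_ge0.
have Lik_fin : Lik f x th \is a fin_num.
  move: Rc_le int_ge0; rewrite /Lik; case: (intM f _) => //.
by apply: le_trans Rc_le _; rewrite -sube_ge0 ?Lik_fin ?orbT.
Qed.

Section density_moments.
Context (R : realType).
Local Notation mu := (@lebesgue_measure R).
Local Notation D := (`[0%R, +oo[%classic : set R).
Variables (f : R -> R) (beta : R).
Hypotheses (mf : measurable_fun D f) (f_ge0 : forall y, D y -> 0 <= f y).

Lemma intM_lt_pinfty_integrable (h : R -> R) : measurable_fun D h ->
  (forall y, D y -> 0 <= h y) -> (intM f h < +oo)%E ->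
  mu.-integrable D (EFin \o (fun y => h y * f y)).
Proof.
move=> mh h_ge0 intM_fin; apply/integrableP; split.
  by apply/measurable_EFinP; exact: measurable_funM.
rewrite (le_lt_trans _ intM_fin) // le_eqVlt; apply/orP; left; apply/eqP.
by apply: eq_integral => y /[!inE] Dy /=; rewrite ger0_norm ?mulr_ge0 ?h_ge0 ?f_ge0.
Qed.

Let measurable_exp_lin (lam : R) : measurable_fun D (fun y => expR (lam * y)).
Proof.
apply: measurableT_comp; first exact: measurable_expR.
by apply: measurable_funM => //; exact: measurable_cst.
Qed.

Lemma A2_exp_integrable : A2 f beta -> forall lam, lam < beta ->
  mu.-integrable D (EFin \o (fun y => expR (lam * y) * f y)).
Proof.
move=> hA2 lam lam_lt; apply: intM_lt_pinfty_integrable.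
- exact: measurable_exp_lin.
- by move=> y _; exact: expR_ge0.
- exact/(hA2.1 lam).2.
Qed.

Lemma A3_sq_exp_integrable : A2 f beta -> A3 f -> forall lam, lam < beta ->
  mu.-integrable D (EFin \o (fun y => y ^+ 2 * expR (lam * y) * f y)).
Proof.
move=> hA2 hA3 lam lam_lt; apply: intM_lt_pinfty_integrable.
- by apply: measurable_funM => //; exact/measurable_funX.
- by move=> y _; rewrite mulr_ge0 ?sqr_ge0 ?expR_ge0.
- exact/hA3/(hA2.1 lam).2.
Qed.

End density_moments.

Section likelihood_path.
Context (R : realType).
Local Notation mu := (@lebesgue_measure R).
Local Notation D := (`[0%R, +oo[%classic : set R).
Variables (f : R -> R) (beta : R) (n : nat) (x : 'I_n -> R).
Hypotheses (mf : measurable_fun D f) (f_ge0 : forall y, D y -> 0 <= f y).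
Hypothesis exp_integrable : forall lam, lam < beta ->
  mu.-integrable D (EFin \o (fun y => expR (lam * y) * f y)).
Hypothesis sq_exp_integrable : forall lam, lam < beta ->
  mu.-integrable D (EFin \o (fun y => y ^+ 2 * expR (lam * y) * f y)).
Variables (th : R -> R) (tau sR mR t : R).
Hypotheses (mth : measurable_fun D th) (tau_ge0 : 0 <= tau) (t_ge0 : 0 <= t).
Hypothesis mR_lt_beta : mR < beta.
Hypothesis path_le_affine : forall y, 0 <= y -> th y + t * Vtau tau y <= sR + mR * y.

Local Notation V := (Vtau tau).
Local Notation g := (greal f x th tau).
Local Notation J := (tilt_moment th V f).

Let mV : measurable_fun D V.
Proof. exact: nondecreasing_measurable (measurable_itv _) (@Vtau_nondecreasing R tau). Qed.

(* Integrability at q = t + delta, where the exponent stays below mR + delta < beta,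
   controls g on the neighbourhood ]-oo, q[ of t. *)
Let delta := (beta - mR) / 2.
Let q := t + delta.

Let delta_gt0 : 0 < delta.
Proof. by rewrite divr_gt0 // subr_gt0. Qed.

Let mR_delta_lt_beta : mR + delta < beta.
Proof. by rewrite -ltrBrDl ltr_pdivrMr // ltr_pMr ?subr_gt0 // ltr1n. Qed.

Let t_lt_q : t < q.
Proof. by rewrite ltrDl. Qed.

Lemma integrable_tilt_integrand_q k : (k <= 2)%N ->
  mu.-integrable D (EFin \o tilt_integrand th V f k q).
Proof.
move=> k_le2; pose lam := mR + delta.
have dom_int : mu.-integrable D (EFin \o (fun y =>
    expR sR * (expR (lam * y) * f y + y ^+ 2 * expR (lam * y) * f y))).
  pose A y := expR (lam * y) * f y; pose B y := y ^+ 2 * expR (lam * y) * f y.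
  have -> : EFin \o (fun y => expR sR * (A y + B y)) =
      (fun y => (expR sR)%:E * ((EFin \o A) \+ (EFin \o B)) y)%E.
    by apply/funext => y /=; rewrite EFinM EFinD.
  exact/integrableZl/integrableD/sq_exp_integrable/mR_delta_lt_beta/exp_integrable.
apply: le_integrable dom_int => //.
  by apply/measurable_EFinP; exact: measurable_tilt_integrand.
move=> y /[dup] Dy /in_itvcy_ge0 y_ge0 /=.
have fy_ge0 := f_ge0 Dy; have V_le := Vtau_le_id tau_ge0 y_ge0.
have V_ge0 := Vtau_ge0 tau y.
have V_pow_le : V y ^+ k <= 1 + y ^+ 2.
  case: k k_le2 => [|[|[|//]]] _; rewrite ?expr0 ?expr1 ?expr2; nra.
have lhs_ge0 : 0 <= tilt_integrand th V f k q y.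
  by apply: tilt_integrand_ge0 => // z; exact: Vtau_ge0.
rewrite lee_fin !ger0_norm //; last first.
  by rewrite mulr_ge0 ?expR_ge0 // addr_ge0 ?mulr_ge0 ?sqr_ge0 ?expR_ge0.
apply: le_trans (tilt_integrand_le (th := th) (v := V) (u := q) (s := sR) (m := lam)
  (Vtau_ge0 tau) f_ge0 k Dy _) _.
  have := path_le_affine y_ge0; have := ler_wpM2l (ltW delta_gt0) V_le.
  rewrite /q /lam; lra.
have -> : expR (lam * y) * f y + y ^+ 2 * expR (lam * y) * f y =
    (1 + y ^+ 2) * expR (lam * y) * f y by ring.
by rewrite ler_wpM2l ?expR_ge0 // ler_wpM2r // ler_wpM2r ?expR_ge0.
Qed.

Lemma integrable_tilt_integrand k u : (k <= 2)%N -> u <= q ->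
  mu.-integrable D (EFin \o tilt_integrand th V f k u).
Proof.
move=> k_le2 u_le_q.
apply: (le_integrable_tilt (k := k) mth mV mf (Vtau_ge0 tau) f_ge0 u_le_q).
exact: integrable_tilt_integrand_q.
Qed.

Lemma intM_exp_addsc u : u <= q ->
  intM f (fun y => expR (addsc th u V y)) = (J 0 u)%:E.
Proof.
move=> u_le_q; transitivity (\int[mu]_(y in D) (tilt_integrand th V f 0 u y)%:E)%E.
  by apply: eq_integral => y _; rewrite /tilt_integrand /addsc expr0 mul1r mulrC.
rewrite /tilt_moment /Rintegral fineK // integrable_fin_num //.
exact: integrable_tilt_integrand.
Qed.

Lemma grealE u : u <= q -> g u = u * Phat_int x V - (J 0 u - J 0 0).
Proof.
move=> u_le_q; have q_ge0 : 0 <= q := addr_ge0 t_ge0 (ltW delta_gt0).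
rewrite /greal /gfun /Lik intM_exp_addsc // Phat_int_addsc.
have -> : intM f (fun y => expR (th y)) = (J 0 0)%:E.
  rewrite -(intM_exp_addsc q_ge0); congr intM.
  by apply/funext => y; rewrite /addsc mul0r addr0.
by rewrite -!EFinB /=; ring.
Qed.

Lemma is_derive_greal u : u < q -> is_derive u (1 : R) g (Phat_int x V - J 1 u).
Proof.
move=> u_lt_q.
have g_near : \forall w \near u, w * Phat_int x V - (J 0 w - J 0 0) = g w.
  by apply: filterS (lt_nbhsl u_lt_q) => w /ltW w_le_q; rewrite grealE.
apply: near_eq_is_derive g_near _.
have := is_derive_tilt_moment mth mV mf (Vtau_ge0 tau) f_ge0 u_lt_q
  (integrable_tilt_integrand_q (k := 0) isT) (integrable_tilt_integrand_q (k := 1) isT).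
move=> dJ0; apply: is_derive_eq.
by rewrite scaler0 add0r subr0 [_%:A]mulr1.
Qed.

Lemma is_derive2_greal : is_derive t (1 : R) (derive1 g) (- J 2 t).
Proof.
have dg_near : \forall w \near t, Phat_int x V - J 1 w = derive1 g w.
  apply: filterS (lt_nbhsl t_lt_q) => w /is_derive_greal dg.
  by rewrite derive1E derive_val.
apply: near_eq_is_derive dg_near _.
have := is_derive_tilt_moment mth mV mf (Vtau_ge0 tau) f_ge0 t_lt_q
  (integrable_tilt_integrand_q (k := 1) isT) (integrable_tilt_integrand_q (k := 2) isT).
by move=> dJ1; apply: is_derive_eq; rewrite add0r mul1r.
Qed.

Lemma tilt_moment2_le :
  J 2 t <= expR sR * fine (intM f (fun y => y ^+ 2 * expR (mR * y))).
Proof.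
pose B y := y ^+ 2 * expR (mR * y) * f y.
have B_int : mu.-integrable D (EFin \o B) := sq_exp_integrable mR_lt_beta.
rewrite -[fine _]/(Rintegral mu D B) -RintegralZl //.
apply: le_Rintegral => //.
- exact: integrable_tilt_integrand (ltW t_lt_q).
- have -> : EFin \o (fun y => expR sR * B y) = (fun y => (expR sR)%:E * (EFin \o B) y)%E.
    by apply/funext => y; rewrite /= EFinM.
  exact: integrableZl.
move=> y /[dup] Dy /in_itvcy_ge0 y_ge0.
apply: le_trans (tilt_integrand_le (th := th) (v := V) (u := t) (s := sR) (m := mR)
  (Vtau_ge0 tau) f_ge0 2 Dy (path_le_affine y_ge0)) _.
have V_le := Vtau_le_id tau_ge0 y_ge0; have V_ge0 := Vtau_ge0 tau y.
rewrite ler_wpM2l ?expR_ge0 // ler_wpM2r ?f_ge0 // ler_wpM2r ?expR_ge0 //.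
by rewrite !expr2; nra.
Qed.

Lemma greal_second_derivative_bound :
  (\forall u \near t, derivable g u 1) /\ derivable (derive1 g) t 1 /\
  `|derive1 (derive1 g) t| <= expR sR * fine (intM f (fun y => y ^+ 2 * expR (mR * y))).
Proof.
split; first by apply: filterS (lt_nbhsl t_lt_q) => u /is_derive_greal [].
have [d2g_ex d2gE] := is_derive2_greal; split => //.
rewrite derive1E d2gE normrN ger0_norm; first exact: tilt_moment2_le.
by apply: Rintegral_ge0 => y Dy; apply: tilt_integrand_ge0 => // z; exact: Vtau_ge0.
Qed.

End likelihood_path.

Theorem mainTheorem6 (R : realType) (f : R -> R) (beta : R) (n : nat) (x : 'I_n -> R)
  (hdens : is_density f) (hA1 : A1 f) (hA2 : A2 f beta) (hA3 : A3 f)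
  (hn : (0 < n)%N) (hx0 : forall i, 0 <= x i)
  (hxs : forall i j : 'I_n, (i <= j)%N -> x i <= x j) :
  exists C : R -> R -> R,
  forall (eps Rc sR mR : R), 0 < eps -> 0 <= sR -> mR < beta ->
  (forall phi : R -> R, inTheta phi -> (Rc%:E <= Lik f x phi)%E ->
     `|phi 0| <= sR /\ (forall y, 0 <= y -> rderiv phi y <= mR)) ->
  forall (th : R -> R) (tau : R), inTheta th -> 0 <= tau ->
  (exists l : \bar R, DLlim f x th (Vtau tau) l /\ (eps%:E < l)%E) ->
  (Rc%:E <= Lik f x th)%E ->
  forall t : R, 0 <= t -> (0 <= gfun f x th tau t)%E ->
    (\forall u \near t, derivable (greal f x th tau) u 1) /\
    derivable (derive1 (greal f x th tau)) t 1 /\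
    `|derive1 (derive1 (greal f x th tau)) t| <= C sR mR.
Proof.
exists (fun sR mR => expR sR * fine (intM f (fun y => y ^+ 2 * expR (mR * y)))).
(* the bound holds without the hypothesis DL(theta, V_tau) > eps *)
move=> _ Rc sR mR _ _ mR_lt_beta Theta_bound th tau thT tau_ge0 _ Rc_le t t_ge0 g_ge0.
have f_ge0 y : `[0%R, +oo[%classic y -> 0 <= f y by move/in_itvcy_ge0; exact: hdens.1.
have mf : measurable_fun (`[0%R, +oo[%classic : set R) f.
  exact: subspace_continuous_measurable_fun (measurable_itv _) hA1.1.
have exp_int := A2_exp_integrable mf f_ge0 hA2.
have sq_exp_int := A3_sq_exp_integrable mf f_ge0 hA2 hA3.
have pathT := inTheta_addsc_Vtau tau thT t_ge0.
have [phi0_le rderiv_le] := Theta_bound _ pathT (Lik_addsc_ge hdens.1 Rc_le g_ge0).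
have path_le y : 0 <= y -> th y + t * Vtau tau y <= sR + mR * y.
  exact: (Theta_le_affine pathT phi0_le rderiv_le (y := y)).
exact: (greal_second_derivative_bound x mf f_ge0 exp_int sq_exp_int
  (measurable_Theta thT) tau_ge0 t_ge0 mR_lt_beta path_le).
Qed.
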